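(* A graph $G$ on $n$ vertices is an outerplanar triangulation of pathwidth at most $2$ if and only if $G\in PW_2(n)$.
   Context: An outerplanar triangulation is a planar graph that can be drawn in the plane so that the outer face is incident with all vertices and every other face is incident with exactly three vertices. A path decomposition of $G$ is a sequence $(G_i)_{i=1}^m$ of subgraphs of $G$ such that every edge of $G$ lies in some $G_i$ and, for every vertex $v$, the indices $i$ with $v\in G_i$ form a contiguous interval; the pathwidth of $G$ is the least $k$ such that $G$ has a path decomposition with every $G_i$ having at most $k+1$ vertices. $PW_2(n)$ is the class of outerplanar triangulations $G$ on $n$ vertices whose vertex set can be partitioned into two disjoint sets $V_u\cup V_v=V(G)$ such that the induced subgraphs $G[V_u]$ and $G[V_v]$ are paths. *)

From mathcomp Require Import all_boot.
Set Implicit Arguments. Unset Strict Implicit. Unset Printing Implicit Defensive.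

Definition btw (i j k : nat) : bool := ((i < j) && (j < k)) || ((k < j) && (j < i)).

(* With vertices placed on a circle in the cyclic order given by the positions
   p, the chords xy and uv cross (they have four distinct endpoints that
   alternate around the circle). *)
Definition cross (T : finType) (p : T -> 'I_#|T|) (x y u v : T) : bool :=
  [&& x != u, x != v, y != u, y != v &
      btw (p x) (p u) (p y) != btw (p x) (p v) (p y)].

(* Outerplanar triangulation: G has a drawing with all vertices on the outer
   face, i.e. (combinatorially) a placement of the vertices in convex position
   (cyclic order p) with no two edges crossing, and every inner face is a
   triangle, i.e. the set of chords is maximal non-crossing: every non-edge
   would cross some edge. *)
Definition outerplanar_triangulation (T : finType) (e : rel T) : Prop :=
  exists p : T -> 'I_#|T|,
    injective p /\
    (forall x y u v, e x y -> e u v -> ~~ cross p x y u v) /\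
    (forall x y, x != y -> ~~ e x y -> exists u v, e u v /\ cross p x y u v).

(* A path decomposition (given by the vertex sets of the subgraphs G_i):
   every edge lies in some bag, and the bags containing any vertex are
   contiguous. *)
Definition path_decomposition (T : finType) (e : rel T) (B : seq {set T}) : Prop :=
  (forall x y, e x y -> exists2 b, b \in B & (x \in b) && (y \in b)) /\
  (forall v i j k, i <= j -> j <= k -> k < size B ->
     v \in nth set0 B i -> v \in nth set0 B k -> v \in nth set0 B j).

Definition pathwidth_le (T : finType) (e : rel T) (k : nat) : Prop :=
  exists B : seq {set T}, path_decomposition e B /\ forall b, b \in B -> #|b| <= k.+1.

Definition induced_path (T : finType) (e : rel T) (S : {set T}) : Prop :=
  exists s : seq T, [/\ s != [::], uniq s, S = [set x in s] &
    forall (x0 : T) i j, i < size s -> j < size s ->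
      e (nth x0 s i) (nth x0 s j) = (i.+1 == j) || (j.+1 == i)].

Definition PW2 (n : nat) (T : finType) (e : rel T) : Prop :=
  #|T| = n /\ outerplanar_triangulation e /\
  exists Vu Vv : {set T}, [/\ [disjoint Vu & Vv], Vu :|: Vv = [set: T],
     induced_path e Vu & induced_path e Vv].

(* Place the vertices on the outer cycle at positions 0, ..., n - 1.  Edges are
   pairwise non-crossing chords and every non-edge crosses an edge, so every
   chord [ab] is a side of a triangle on each of its sides (an ear), and all
   sides of the cycle are edges.  Call a triangle inner if none of its sides
   lies on the cycle.  An inner triangle together with its three ears is a
   3-sun, which has no path decomposition of width 2 and whose vertices cannot
   be split into two induced paths (a path avoiding the ends of a chord stays
   on one side of it).  Conversely, if there is no inner triangle, the two
   regions cut off by the ear of the chord between positions 0 and n - 1 are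
   fans: peeling off one triangle at a time gives a width-2 path decomposition,
   and every chord of a fan crosses one fixed cut, so the two arcs between the
   cuts of the two fans induce paths. *)

From mathcomp Require Import all_boot zify.
Set Implicit Arguments. Unset Strict Implicit. Unset Printing Implicit Defensive.

Definition outerplanar_placement (T : finType) (e : rel T) (p : T -> 'I_#|T|) : Prop :=
  injective p /\ (forall x y u v, e x y -> e u v -> ~~ cross p x y u v) /\
  (forall x y, x != y -> ~~ e x y -> exists u v, e u v /\ cross p x y u v).

Definition cyclic_adj (n i j : nat) : bool :=
  [|| j == i.+1, i == j.+1, (i == 0) && (j == n.-1) | (j == 0) && (i == n.-1)].

Lemma succ_modE n i : i < n -> i.+1 %% n = if i.+1 == n then 0 else i.+1.
Proof. by move=> lt_in; case: eqP => [-> | ne]; rewrite ?modnn // modn_small; lia. Qed.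

Lemma btw_succ_mod n a b c d : a < n -> b < n -> c < n -> d < n ->
  a != b -> a != c -> a != d -> b != c -> b != d -> c != d ->
  (btw (a.+1 %% n) (c.+1 %% n) (b.+1 %% n) != btw (a.+1 %% n) (d.+1 %% n) (b.+1 %% n))
  = (btw a c b != btw a d b).
Proof.
move=> ha hb hc hd *; rewrite !succ_modE // /btw.
by case: (a.+1 =P n); case: (b.+1 =P n); case: (c.+1 =P n); case: (d.+1 =P n); lia.
Qed.

Lemma modnD_small n i r : i < n -> r <= n ->
  (i + r) %% n = if i + r < n then i + r else i + r - n.
Proof.
move=> lt_in le_rn; case: ifP => lt; first by rewrite modn_small.
have le : n <= i + r by rewrite leqNgt lt.
by rewrite -{1}(subnK le) modnDr modn_small //; lia.
Qed.

Lemma cyclic_adjC n i j : cyclic_adj n i j = cyclic_adj n j i.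
Proof. by rewrite /cyclic_adj orbCA [X in _ || (_ || X)]orbC. Qed.

Lemma cyclic_adj_shift n s i j len : s < n -> len < n -> i < len -> j < len ->
  cyclic_adj n ((s + i) %% n) ((s + j) %% n) = (i.+1 == j) || (j.+1 == i).
Proof.
move=> lt_sn lt_len lt_i lt_j; rewrite !modnD_small; try lia.
by rewrite /cyclic_adj; case: ifP; case: ifP => ? ?; apply/idP/idP; lia.
Qed.

Lemma cards3_le (T : finType) (a b c : T) : #|[set a; b; c]| <= 3.
Proof.
have : [set a; b; c] \subset [:: a; b; c] by apply/subsetP => x; rewrite !inE -orbA.
by move/subset_leq_card/leq_trans; apply; apply: card_size.
Qed.

Lemma card_le3_uniq4 (T : finType) (c : {set T}) x1 x2 x3 x4 : #|c| <= 3 ->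
  x1 \in c -> x2 \in c -> x3 \in c -> x4 \in c -> ~~ uniq [:: x1; x2; x3; x4].
Proof.
move=> c3 h1 h2 h3 h4; apply/negP => u.
have : #|[:: x1; x2; x3; x4]| <= #|c|.
  by apply: subset_leq_card; apply/subsetP => x; rewrite !inE => /or4P [] /eqP ->.
by rewrite (card_uniqP u) /=; lia.
Qed.

Lemma induced_path_triangle_free (T : finType) (e : rel T) S x y z : induced_path e S ->
  x \in S -> y \in S -> z \in S -> e x y -> e y z -> e x z -> False.
Proof.
case=> s [_ _ -> adj]; rewrite !inE => xs ys zs exy eyz exz.
have := adj x (index x s) (index y s); have := adj x (index y s) (index z s).
have := adj x (index x s) (index z s); rewrite !nth_index ?index_mem //.
move=> /(_ xs zs) + /(_ ys zs) + /(_ xs ys); rewrite exy eyz exz.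
by move: (index x s) (index y s) (index z s) => i j k; lia.
Qed.

Section PathDecomposition.
Variable T : finType.

Definition contiguous (B : seq {set T}) : Prop :=
  forall v i j k, i <= j -> j <= k -> k < size B ->
    v \in nth set0 B i -> v \in nth set0 B k -> v \in nth set0 B j.

Lemma contiguous_between B v i j k : contiguous B -> (i <= j <= k) || (k <= j <= i) ->
  i < size B -> k < size B -> v \in nth set0 B i -> v \in nth set0 B k -> v \in nth set0 B j.
Proof.
move=> C /orP [/andP [h1 h2] | /andP [h1 h2]] hi hk vi vk; first exact: (C v i j k).
exact: (C v k j i).
Qed.

Lemma contiguous_cons (b : {set T}) B : contiguous B ->
  (forall v i, i < size B -> v \in b -> v \in nth set0 B i -> v \in nth set0 B 0) ->
  contiguous (b :: B).
Proof.
move=> C H v [|i] [|j] [|k] //= hij hjk hk; last by apply: (C v i j k).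
by move=> vb vk; apply: (C v 0 j k) => //; apply: (H v k).
Qed.

Lemma contiguous_rev B : contiguous B -> contiguous (rev B).
Proof.
move=> C v i j k hij hjk; rewrite size_rev => hk.
rewrite !nth_rev; try lia; move=> vi vk.
by apply: (C v (size B - k.+1) (size B - j.+1) (size B - i.+1)) => //; lia.
Qed.

Lemma contiguous_cat A B : contiguous A -> contiguous B ->
  (forall v i j, i < size A -> j < size B -> v \in nth set0 A i -> v \in nth set0 B j ->
     (v \in nth set0 A (size A).-1) /\ (v \in nth set0 B 0)) -> contiguous (A ++ B).
Proof.
move=> CA CB H v i j k hij hjk; rewrite size_cat => hk; rewrite !nth_cat.
case: (ltnP k (size A)) => hkA.
  by rewrite (_ : i < size A) 1?(_ : j < size A); [apply: CA | lia | lia].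
case: (ltnP i (size A)) => hiA vi vk.
  have [vA vB] := H v i (k - size A) hiA (ltac:(lia)) vi vk.
  case: ifP => hjA; first by apply: (CA v i j (size A).-1) => //; lia.
  by apply: (CB v 0 (j - size A) (k - size A)) => //; lia.
rewrite (_ : j < size A = false); last by lia.
by apply: (CB v (i - size A) (j - size A) (k - size A)) => //; lia.
Qed.

Variables (e : rel T) (B : seq {set T}).
Hypothesis B_dec : path_decomposition e B.

Lemma edge_in_bag x y : e x y ->
  exists2 i, i < size B & (x \in nth set0 B i) && (y \in nth set0 B i).
Proof.
by case: B_dec => cov _ /cov [b bB xyb]; exists (index b B); rewrite ?index_mem ?nth_index.
Qed.

(* Helly property of subpaths: pairwise intersecting intervals of bags meet. *)
Lemma triangle_in_bag x y z : e x y -> e y z -> e x z -> exists2 i, i < size B &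
  [&& x \in nth set0 B i, y \in nth set0 B i & z \in nth set0 B i].
Proof.
have C : contiguous B by case: B_dec.
move=> /edge_in_bag [i1 s1 /andP [x1 y1]] /edge_in_bag [i2 s2 /andP [y2 z2]].
move=> /edge_in_bag [i3 s3 /andP [x3 z3]].
have : [|| (i1 <= i2 <= i3) || (i3 <= i2 <= i1), (i2 <= i1 <= i3) || (i3 <= i1 <= i2)
         | (i1 <= i3 <= i2) || (i2 <= i3 <= i1)] by lia.
case/or3P => h.
- by exists i2; rewrite // y2 z2 (contiguous_between C h s1 s3 x1 x3).
- by exists i1; rewrite // x1 y1 (contiguous_between C h s2 s3 z2 z3).
- by exists i3; rewrite // x3 z3 (contiguous_between C h s1 s2 y1 y2).
Qed.

(* The 3-sun: a triangle [a w b] with an ear on each side.  Each of the four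
   triangles lies in a bag; some ear's bag lies between the central bag and
   another ear's bag, so it also holds the third central vertex. *)
Lemma width2_no_sun a w b x y z : (forall c, c \in B -> #|c| <= 3) ->
  e a w -> e w b -> e a b -> e a x -> e x w -> e w y -> e y b -> e a z -> e z b ->
  ~~ uniq [:: a; w; b; x; y; z].
Proof.
move=> width eaw ewb eab eax exw ewy eyb eaz ezb; apply/negP => u.
have C : contiguous B by case: B_dec.
have bag3 i u1 u2 u3 u4 : i < size B -> u1 \in nth set0 B i -> u2 \in nth set0 B i ->
    u3 \in nth set0 B i -> u4 \in nth set0 B i -> ~~ uniq [:: u1; u2; u3; u4].
  by move=> hi; apply: card_le3_uniq4; apply/width/mem_nth.
have [t0 s0 /and3P [a0 w0 b0]] := triangle_in_bag eaw ewb eab.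
have [t1 s1 /and3P [a1 x1 w1]] := triangle_in_bag eax exw eaw.
have [t2 s2 /and3P [w2 y2 b2]] := triangle_in_bag ewy eyb ewb.
have [t3 s3 /and3P [a3 z3 b3]] := triangle_in_bag eaz ezb eab.
move: u; rewrite /= !inE !negb_or.
move=> /and5P [/and5P [aw ab ax ay az] /and4P [wb wx wy wz] /and3P [bx byy bz] /andP [xy xz] _].
have d1 : t0 != t1.
  apply/eqP => t01; subst t1; apply/negP: (bag3 _ _ _ _ _ s0 a0 w0 b0 x1).
  by rewrite /= !inE !negb_or aw ab ax wb wx bx.
have d2 : t0 != t2.
  apply/eqP => t02; subst t2; apply/negP: (bag3 _ _ _ _ _ s0 a0 w0 b0 y2).
  by rewrite /= !inE !negb_or aw ab ay wb wy byy.
have d3 : t0 != t3.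
  apply/eqP => t03; subst t3; apply/negP: (bag3 _ _ _ _ _ s0 a0 w0 b0 z3).
  by rewrite /= !inE !negb_or aw ab az wb wz bz.
have : [|| ((t0 <= t1 <= t2) || (t2 <= t1 <= t0)) || ((t0 <= t1 <= t3) || (t3 <= t1 <= t0)),
           ((t0 <= t2 <= t1) || (t1 <= t2 <= t0)) || ((t0 <= t2 <= t3) || (t3 <= t2 <= t0))
         | ((t0 <= t3 <= t1) || (t1 <= t3 <= t0)) || ((t0 <= t3 <= t2) || (t2 <= t3 <= t0))].
  by clear -d1 d2 d3; lia.
case/or3P => /orP h.
- have b1 : b \in nth set0 B t1.
    by case: h => h; [apply: (contiguous_between C h s0 s2) |
                      apply: (contiguous_between C h s0 s3)].
  apply/negP: (bag3 _ _ _ _ _ s1 a1 w1 x1 b1).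
  by rewrite /= !inE !negb_or aw ax ab wx wb (eq_sym x b) bx.
- have a2 : a \in nth set0 B t2.
    by case: h => h; [apply: (contiguous_between C h s0 s1) |
                      apply: (contiguous_between C h s0 s3)].
  apply/negP: (bag3 _ _ _ _ _ s2 w2 b2 y2 a2).
  by rewrite /= !inE !negb_or wb wy (eq_sym w a) aw byy (eq_sym b a) ab (eq_sym y a) ay.
- have w3 : w \in nth set0 B t3.
    by case: h => h; [apply: (contiguous_between C h s0 s1) |
                      apply: (contiguous_between C h s0 s2)].
  apply/negP: (bag3 _ _ _ _ _ s3 a3 b3 z3 w3).
  by rewrite /= !inE !negb_or ab az aw bz (eq_sym b w) wb (eq_sym z w) wz.
Qed.

End PathDecomposition.

Section Rotation.
Variables (T : finType) (e : rel T).
Local Notation n := #|T|.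

Definition rotate (p : T -> 'I_n) (r : nat) (x : T) : 'I_n := iter r (@ordS n) (p x).

Lemma rotateE p r x : nat_of_ord (rotate p r x) = (p x + r) %% n.
Proof.
rewrite /rotate; elim: r => [|r IH] /=; first by rewrite addn0 modn_small.
by rewrite IH -addn1 modnDml addn1 addnS.
Qed.

Lemma cross_ordS (p : T -> 'I_n) x y u v :
  injective p -> cross (fun z => ordS (p z)) x y u v = cross p x y u v.
Proof.
move=> p_inj; rewrite /cross /=.
have pos_neq a b : (a != b) = (nat_of_ord (p a) != p b) by rewrite -(inj_eq p_inj).
case: (boolP (x != u)) => //= xu; case: (boolP (x != v)) => //= xv.
case: (boolP (y != u)) => //= yu; case: (boolP (y != v)) => //= yv.
case: (eqVneq x y) => [-> | xy]; first by rewrite /btw; lia.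
case: (eqVneq u v) => [-> | uv]; first by rewrite !eqxx.
by apply: btw_succ_mod; rewrite ?ltn_ord // -?pos_neq // eq_sym.
Qed.

Lemma ordS_placement p :
  outerplanar_placement e p -> outerplanar_placement e (fun x => ordS (p x)).
Proof.
case=> p_inj [nocross maximal]; split; first exact: inj_comp (@ordS_inj n) p_inj.
split=> [x y u v exy euv | x y xy nexy]; first by rewrite cross_ordS //; apply: nocross.
by have [u [v [euv cr]]] := maximal x y xy nexy; exists u, v; rewrite cross_ordS.
Qed.

Lemma rotate_placement p r : outerplanar_placement e p -> outerplanar_placement e (rotate p r).
Proof. by move=> pP; elim: r => // r; apply: ordS_placement. Qed.

End Rotation.

Section OuterplanarTriangulation.
Variables (T : finType) (e : rel T).
Hypotheses (e_sym : symmetric e) (e_irr : irreflexive e) (n_gt2 : 2 < #|T|).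
Local Notation n := #|T|.

Section Placement.
Variables (p : T -> 'I_n) (pP : outerplanar_placement e p).
Local Notation P x := (nat_of_ord (p x)).

Lemma pos_inj x y : P x = P y -> x = y.
Proof. by move=> h; apply: (proj1 pP); apply: ord_inj. Qed.

Lemma pos_neq x y : (x != y) = (P x != P y).
Proof. by apply/idP/idP; apply: contra => /eqP h; apply/eqP; [apply: pos_inj | rewrite h]. Qed.

Lemma cross_pos x y u v : cross p x y u v =
  [&& P x != P u, P x != P v, P y != P u, P y != P v &
      btw (P x) (P u) (P y) != btw (P x) (P v) (P y)].
Proof. by rewrite /cross !pos_neq. Qed.

Lemma noncrossing x y u v : e x y -> e u v ->
  P x != P u -> P x != P v -> P y != P u -> P y != P v ->
  btw (P x) (P u) (P y) = btw (P x) (P v) (P y).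
Proof.
move=> exy euv xu xv yu yv.
by move: (proj1 (proj2 pP) _ _ _ _ exy euv); rewrite cross_pos xu xv yu yv => /negPn/eqP.
Qed.

Lemma pos_surj j : j < n -> exists x, P x = j.
Proof.
move=> lt_jn.
have /codomP [x hx] := inj_card_onto (proj1 pP) (eq_leq (card_ord n)) (Ordinal lt_jn).
by exists x; rewrite -hx.
Qed.

Lemma hull_edge x y : cyclic_adj n (P x) (P y) -> e x y.
Proof.
move=> adj; apply/negPn/negP => nexy.
have xy : x != y by rewrite pos_neq; move: adj; rewrite /cyclic_adj; lia.
have [u [v [euv]]] := proj2 (proj2 pP) _ _ xy nexy.
rewrite cross_pos /btw => cr.
move: (ltn_ord (p u)) (ltn_ord (p v)) (ltn_ord (p x)) (ltn_ord (p y)) adj.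
rewrite /cyclic_adj; lia.
Qed.

(* Among the neighbours of [a] strictly inside the arc [ab], the one closest to
   [b] is also a neighbour of [b]: an edge separating it from [b] would cross
   [ab] or the edge from [a] to it, or contradict its maximality. *)
Lemma ear_inside a b : e a b -> (P a).+1 < P b ->
  exists w, [/\ P a < P w < P b, e a w & e w b].
Proof.
move=> eab gap.
have [w0 hw0] := pos_surj (ltn_trans gap (ltn_ord (p b))).
have c0 : (P a < P w0 < P b) && e a w0.
  by rewrite hw0 leqnn gap hull_edge // hw0 /cyclic_adj eqxx.
case: (@arg_maxnP _ w0 (fun w => (P a < P w < P b) && e a w) (fun w => P w) c0).
move=> w /andP [rng eaw] maxw; exists w; split=> //.
apply/negPn/negP => new.
have wb : w != b by rewrite pos_neq; lia.
have key c d : e c d -> P w < P c < P b -> ~~ (P w < P d < P b) ->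
    P d != P w -> P d != P b -> False.
  move=> ecd hc hd dw db.
  have ltd := ltn_ord (p d).
  case: (ltngtP (P d) (P a)) => hda.
  - by have := noncrossing eab ecd; rewrite /btw; lia.
  - case: (ltnP (P b) (P d)) => hbd.
      by have := noncrossing eab ecd; rewrite /btw; lia.
    by have := noncrossing eaw ecd; rewrite /btw; lia.
  - have := maxw c; rewrite -(pos_inj hda) (e_sym d c) ecd andbT => H.
    have : P d < P c < P b by lia.
    by move/H; lia.
have [c [d [ecd]]] := proj2 (proj2 pP) _ _ wb new.
rewrite cross_pos => /and5P [c1 c2 c3 c4 c5].
case: (boolP (P w < P c < P b)) => hc.
  by apply: (key c d ecd hc); rewrite 1?eq_sym //; move: c5; rewrite /btw; lia.
apply: (key d c); rewrite 1?e_sym 1?eq_sym //; move: c5 hc; rewrite /btw; lia.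
Qed.

End Placement.

Section Triangles.
Variables (p : T -> 'I_n) (pP : outerplanar_placement e p).
Local Notation P x := (nat_of_ord (p x)).

Lemma ear_outside a b : e a b -> P a < P b -> (0 < P a) || (P b < n.-1) ->
  exists w, [/\ (P w < P a) || (P b < P w), e a w & e w b].
Proof.
move=> eab ab outer.
(* Rotating by [n - P b] moves [b] to position 0, and the outer side of [ab]
   inside the arc from [b] to [a]. *)
pose r := n - P b.
have posE x : nat_of_ord (rotate p r x) = if P x + r < n then P x + r else P x + r - n.
  by rewrite rotateE modnD_small //; lia.
have lt x := ltn_ord (p x).
have gap : (nat_of_ord (rotate p r b)).+1 < rotate p r a.
  by rewrite !posE; move: (lt a) (lt b); case: ifP; case: ifP; lia.
have eba : e b a by rewrite e_sym.
have [w [rng ebw ewa]] := ear_inside (rotate_placement r pP) eba gap.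
exists w; split; rewrite 1?e_sym //.
by move: rng; rewrite !posE; move: (lt a) (lt b) (lt w); case: ifP; case: ifP; case: ifP; lia.
Qed.

Lemma path_off_chord_side (s : seq T) x0 a b i j : e a b ->
  (forall t, t.+1 < size s -> e (nth x0 s t) (nth x0 s t.+1)) ->
  a \notin s -> b \notin s -> i < size s -> j < size s ->
  btw (P a) (P (nth x0 s i)) (P b) = btw (P a) (P (nth x0 s j)) (P b).
Proof.
move=> eab s_path a_s b_s.
suff side0 : forall k, k < size s ->
    btw (P a) (P (nth x0 s k)) (P b) = btw (P a) (P (nth x0 s 0)) (P b).
  by move=> hi hj; rewrite !side0.
have off c k : c \notin s -> k < size s -> P c != P (nth x0 s k).
  by move=> c_s lt; rewrite -(pos_neq pP); apply: contraNneq c_s => ->; apply: mem_nth.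
elim=> // k IH lt; rewrite -IH ?(ltnW lt) //.
by apply/esym/(noncrossing pP eab (s_path k lt)); apply: off => //; lia.
Qed.

Lemma partition_ear_side (X Y : {set T}) c1 c2 c3 x :
  [disjoint X & Y] -> X :|: Y = setT -> induced_path e X -> induced_path e Y ->
  c1 \in X -> c2 \in X -> c3 \in Y -> e c1 c2 -> e c1 x -> e x c2 ->
  btw (P c1) (P c3) (P c2) = btw (P c1) (P x) (P c2).
Proof.
move=> dXY XY pathX pathY c1X c2X c3Y e12 e1x ex2.
have xY : x \in Y.
  have : x \in X :|: Y by rewrite XY inE.
  rewrite inE => /orP [xX |] //.
  by case: (induced_path_triangle_free pathX c1X xX c2X e1x ex2 e12).
case: pathY => s [_ _ Ys adj].
have notin c : c \in X -> c \notin s.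
  by move=> cX; rewrite -(in_set (fun y => y \in s)) -Ys (disjointFr dXY cX).
move: c3Y xY; rewrite Ys !inE => c3s xs.
rewrite -(nth_index c1 c3s) -(nth_index c1 xs).
apply: (path_off_chord_side e12); rewrite ?notin ?index_mem //.
by move=> t lt; rewrite adj ?eqxx // ltnW.
Qed.

(* A triangle none of whose sides lies on the outer cycle. *)
Definition inner_triangle a w b : Prop :=
  [/\ P a < P w < P b, e a w, e w b, e a b &
      [&& (P a).+1 < P w, (P w).+1 < P b & (0 < P a) || (P b < n.-1)]].

Lemma inner_triangle_ears a w b : inner_triangle a w b -> exists x y z,
  [/\ [/\ P a < P x < P w, e a x & e x w], [/\ P w < P y < P b, e w y & e y b] &
      [/\ (P z < P a) || (P b < P z), e a z & e z b]].
Proof.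
case=> rng eaw ewb eab /and3P [gap1 gap2 outer].
have [x earx] := ear_inside pP eaw gap1.
have [y eary] := ear_inside pP ewb gap2.
have [z earz] := ear_outside eab (ltac:(lia)) (ltac:(lia)).
by exists x, y, z.
Qed.

Lemma width2_no_inner_triangle a w b : pathwidth_le e 2 -> ~ inner_triangle a w b.
Proof.
case=> B [B_dec width] tri.
have [x [y [z [[hx eax exw] [hy ewy eyb] [hz eaz ezb]]]]] := inner_triangle_ears tri.
case: tri => rng eaw ewb eab _.
apply/negP: (width2_no_sun B_dec width eaw ewb eab eax exw ewy eyb eaz ezb).
rewrite /= !inE !negb_or !(pos_neq pP).
by clear -rng hx hy hz; lia.
Qed.

Lemma path_partition_no_inner_triangle (X Y : {set T}) a w b :
  [disjoint X & Y] -> X :|: Y = setT -> induced_path e X -> induced_path e Y ->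
  ~ inner_triangle a w b.
Proof.
move=> dXY XY pathX pathY tri.
have [x [y [z [[hx eax exw] [hy ewy eyb] [hz eaz ezb]]]]] := inner_triangle_ears tri.
case: tri => rng eaw ewb eab _.
have side_a : btw (P a) (P b) (P w) != btw (P a) (P x) (P w).
  by clear -rng hx; rewrite /btw; lia.
have side_b : btw (P w) (P a) (P b) != btw (P w) (P y) (P b).
  by clear -rng hy; rewrite /btw; lia.
have side_c : btw (P a) (P w) (P b) != btw (P a) (P z) (P b).
  by clear -rng hz; rewrite /btw; lia.
have two_in_one_part (U V : {set T}) : [disjoint U & V] -> U :|: V = setT ->
    induced_path e U -> induced_path e V ->
    [/\ a \in U -> w \in U -> b \in V -> False,
        w \in U -> b \in U -> a \in V -> False &
        a \in U -> b \in U -> w \in V -> False].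
  move=> dUV UV pathU pathV; split=> c1U c2U c3V.
  - have := partition_ear_side dUV UV pathU pathV c1U c2U c3V eaw eax exw.
    by move=> same; move: side_a; rewrite same eqxx.
  - have := partition_ear_side dUV UV pathU pathV c1U c2U c3V ewb ewy eyb.
    by move=> same; move: side_b; rewrite same eqxx.
  - have := partition_ear_side dUV UV pathU pathV c1U c2U c3V eab eaz ezb.
    by move=> same; move: side_c; rewrite same eqxx.
have [k1 k2 k3] := two_in_one_part _ _ dXY XY pathX pathY.
have dYX : [disjoint Y & X] by rewrite disjoint_sym.
have YX : Y :|: X = setT by rewrite setUC.
have [k4 k5 k6] := two_in_one_part _ _ dYX YX pathY pathX.
have inY v : v \notin X -> v \in Y.
  move=> vX; have : v \in X :|: Y by rewrite XY inE.
  by rewrite inE (negbTE vX).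
case: (boolP (a \in X)) => aX; case: (boolP (w \in X)) => wX; case: (boolP (b \in X)) => bX.
- exact: (induced_path_triangle_free pathX aX wX bX eaw ewb eab).
- exact: (k1 aX wX (inY _ bX)).
- exact: (k3 aX bX (inY _ wX)).
- exact: (k5 (inY _ wX) (inY _ bX) aX).
- exact: (k2 wX bX (inY _ aX)).
- exact: (k6 (inY _ aX) (inY _ bX) wX).
- exact: (k4 (inY _ aX) (inY _ wX) bX).
- exact: (induced_path_triangle_free pathY (inY _ aX) (inY _ wX) (inY _ bX) eaw ewb eab).
Qed.

Definition vertex_at (x0 : T) (j : nat) : T := odflt x0 [pick x | P x == j].

Lemma pos_vertex_at x0 j : j < n -> P (vertex_at x0 j) = j.
Proof.
move=> lt_jn; rewrite /vertex_at; case: pickP => [x /eqP // | none].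
by have [x hx] := pos_surj pP lt_jn; move: (none x); rewrite hx eqxx.
Qed.

(* The vertices at cyclic offsets [0, len) from position [s]. *)
Definition arc (s len : nat) : {set T} := [set x | (P x + (n - s)) %% n < len].

Lemma setC_arc s len : s < n -> len <= n -> ~: arc s len = arc ((s + len) %% n) (n - len).
Proof.
move=> lt_sn le_len; apply/setP => x; rewrite !inE.
have lt_x := ltn_ord (p x).
rewrite (modnD_small lt_sn le_len); case: ifP => wrap; rewrite !modnD_small; try lia.
all: by case: ifP; case: ifP => ? ?; apply/idP/idP; lia.
Qed.

Lemma arc_induced_path s len : s < n -> 0 < len < n ->
  (forall x y, x \in arc s len -> y \in arc s len -> e x y -> cyclic_adj n (P x) (P y)) ->
  induced_path e (arc s len).
Proof.
move=> lt_sn len_bds hull_in.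
have [x0 _] := pos_surj pP lt_sn.
pose v i := vertex_at x0 ((s + i) %% n).
have pos_v i : P (v i) = (s + i) %% n by rewrite pos_vertex_at ?ltn_pmod //; lia.
have v_arc i : i < len -> v i \in arc s len.
  move=> lt_i; rewrite inE pos_v modnDml.
  have -> : s + i + (n - s) = i + n by lia.
  by rewrite modnDr modn_small; lia.
exists [seq v i | i <- iota 0 len]; split.
- by rewrite -size_eq0 size_map size_iota; lia.
- rewrite map_inj_in_uniq ?iota_uniq // => i j.
  rewrite !mem_iota !add0n => /andP [_ hi] /andP [_ hj].
  move/(congr1 (fun x => P x)); rewrite !pos_v !modnD_small; try lia.
  by case: ifP; case: ifP; lia.
- apply/setP => x; rewrite !inE; apply/idP/mapP => [x_arc | [i]]; last first.
    by rewrite mem_iota add0n => /andP [_ hi] ->; move: (v_arc i hi); rewrite inE.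
  exists ((P x + (n - s)) %% n); first by rewrite mem_iota add0n.
  apply: (pos_inj pP); rewrite pos_v modnDmr.
  have -> : s + (P x + (n - s)) = P x + n by lia.
  by rewrite modnDr modn_small.
- move=> y0 i j; rewrite size_map size_iota => hi hj.
  rewrite !(nth_map 0) ?size_iota // !nth_iota // !add0n.
  have lt_len : len < n by case/andP: len_bds.
  rewrite -(cyclic_adj_shift lt_sn lt_len hi hj) -!pos_v.
  by apply/idP/idP => [|/(hull_edge pP)//]; apply: hull_in; apply: v_arc.
Qed.

Lemma arc_split_induced_paths s len : s < n -> 0 < len < n ->
  (forall x y, e x y -> ~~ cyclic_adj n (P x) (P y) -> (x \in arc s len) != (y \in arc s len)) ->
  induced_path e (arc s len) /\ induced_path e (~: arc s len).
Proof.
move=> lt_sn len_bds chord.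
have hull_in x y : (x \in arc s len) = (y \in arc s len) -> e x y -> cyclic_adj n (P x) (P y).
  by move=> same exy; apply/negPn/negP => /(chord x y exy); rewrite same eqxx.
split; first by apply: arc_induced_path => // x y xS yS; apply: hull_in; rewrite xS yS.
have lt_len : len <= n by case/andP: len_bds => _ /ltnW.
rewrite setC_arc //; apply: arc_induced_path; rewrite ?ltn_pmod //; try lia.
move=> x y; rewrite -setC_arc // !inE => /negbTE xS /negbTE yS.
by apply: hull_in; rewrite !inE xS yS.
Qed.

Lemma mem_arc_interval m1 m2 x : m1 < m2 < n -> (x \in arc m1.+1 (m2 - m1)) = (m1 < P x <= m2).
Proof.
move=> m12; have lt_x := ltn_ord (p x).
by rewrite inE modnD_small; try lia; case: ifP => ?; apply/idP/idP; lia.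
Qed.

Lemma outer_apex : exists r0 w r1,
  [/\ P r0 = 0, P r1 = n.-1, 0 < P w < n.-1, e r0 w & e w r1].
Proof.
have [r0 h0] : exists r0, P r0 = 0 by apply: (pos_surj pP); lia.
have [r1 h1] : exists r1, P r1 = n.-1 by apply: (pos_surj pP); lia.
have e01 : e r0 r1 by apply: (hull_edge pP); rewrite /cyclic_adj h0 h1 !eqxx !orbT.
have [w [rng e0w ew1]] := ear_inside pP e01 (ltac:(rewrite h0 h1; lia)).
by exists r0, w, r1; split=> //; lia.
Qed.

Lemma apex_edges r0 w r1 x y : P r0 = 0 -> P r1 = n.-1 -> 0 < P w < n.-1 ->
  e r0 w -> e w r1 -> e x y -> P x < P y ->
  [|| P y <= P w, P w <= P x | (P x == 0) && (P y == n.-1)].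
Proof.
move=> h0 h1 hw e0w ew1 exy xy.
have lt_y := ltn_ord (p y).
case: (leqP (P y) (P w)) => // hy; case: (leqP (P w) (P x)) => hx; first by rewrite orbT.
case: (posnP (P x)) => hx0.
  by have := noncrossing pP ew1 exy; rewrite /btw; lia.
by have := noncrossing pP e0w exy; rewrite /btw; lia.
Qed.

Lemma fan_edges_left a w b x y : e w b -> P w = (P a).+1 -> P w < P b ->
  e x y -> P a <= P x -> P x < P y -> P y <= P b ->
  P w <= P x \/ x = a /\ (y = w \/ y = b).
Proof.
move=> ewb hw wb exy hx xy hy.
case: (leqP (P w) (P x)) => hxw; [by left | right].
have xa : x = a by apply: (pos_inj pP); lia.
split=> //; case: (eqVneq (P y) (P w)) => [/(pos_inj pP) -> | yw]; [by left | right].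
apply: (pos_inj pP); apply/eqP/negPn/negP => yb.
by have := noncrossing pP ewb exy; rewrite /btw; lia.
Qed.

Lemma fan_edges_right a w b x y : e a w -> (P w).+1 = P b -> P a < P w ->
  e x y -> P a <= P x -> P x < P y -> P y <= P b ->
  P y <= P w \/ y = b /\ (x = w \/ x = a).
Proof.
move=> eaw hw aw exy hx xy hy.
case: (leqP (P y) (P w)) => hyw; [by left | right].
have yb : y = b by apply: (pos_inj pP); lia.
split=> //; case: (eqVneq (P x) (P w)) => [/(pos_inj pP) -> | xw]; [by left | right].
apply: (pos_inj pP); apply/eqP/negPn/negP => xa.
by have := noncrossing pP eaw exy; rewrite /btw; lia.
Qed.

Definition region_decomposition a b (B : seq {set T}) : Prop :=
  [/\ contiguous B, forall c, c \in B -> #|c| <= 3,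
      (a \in nth set0 B 0) && (b \in nth set0 B 0),
      forall c x, c \in B -> x \in c -> P a <= P x <= P b &
      forall x y, e x y -> P a <= P x -> P x < P y -> P y <= P b ->
        exists2 c, c \in B & (x \in c) && (y \in c)].

Lemma region_decomposition_cons a b c d t B : region_decomposition c d B -> P c < P d ->
  (P t < P c) || (P d < P t) -> P a <= P t <= P b -> P a <= P c -> P d <= P b ->
  a \in [set t; c; d] -> b \in [set t; c; d] ->
  (forall x y, e x y -> P a <= P x -> P x < P y -> P y <= P b ->
     P c <= P x /\ P y <= P d \/ x \in [set t; c; d] /\ y \in [set t; c; d]) ->
  region_decomposition a b ([set t; c; d] :: B).
Proof.
move=> [C width /andP [c0 d0] inside cover] cd t_out ht hc hd a_tri b_tri edges; split.
- apply: contiguous_cons C _ => v i lt_i; rewrite !inE -orbA => /or3P [] /eqP -> vi //.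
  by have := inside _ _ (mem_nth set0 lt_i) vi; lia.
- by move=> bag; rewrite inE => /orP [/eqP -> | /width //]; apply: cards3_le.
- by rewrite /= a_tri b_tri.
- move=> bag x; rewrite inE => /orP [/eqP -> | bB]; last by move/(inside _ _ bB); lia.
  by rewrite !inE -orbA => /or3P [] /eqP ->; lia.
- move=> x y exy hx xy hy; case: (edges x y exy hx xy hy) => [[cx yd] | [xt yt]].
  + by have [bag bB xyb] := cover x y exy cx xy yd; exists bag; rewrite // inE bB orbT.
  + by exists [set t; c; d]; rewrite ?mem_head // xt yt.
Qed.

Lemma region_decompositions_join r0 w r1 B1 B2 :
  P r0 = 0 -> P r1 = n.-1 -> 0 < P w < n.-1 ->
  region_decomposition r0 w B1 -> region_decomposition w r1 B2 ->
  contiguous (rev B1 ++ [set r0; w; r1] :: B2).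
Proof.
move=> h0 h1 hw [C1 _ /andP [r0B1 wB1] inside1 _] [C2 _ /andP [wB2 r1B2] inside2 _].
apply: contiguous_cat; first exact: contiguous_rev.
  apply: contiguous_cons C2 _ => v i lt_i; rewrite !inE -orbA => /or3P [] /eqP -> vi //.
  by have := inside2 _ _ (mem_nth set0 lt_i) vi; lia.
move=> v i j; rewrite size_rev => lt_i lt_j; rewrite nth_rev // => vi vj.
have lt_i' : size B1 - i.+1 < size B1 by lia.
have /andP [_ pv] := inside1 _ _ (mem_nth set0 lt_i') vi.
have v_r0w : (v == r0) || (v == w).
  case: j lt_j vj => [|j] lt_j /= vj.
    move: vj; rewrite !inE -orbA => /or3P [] /eqP vE; rewrite vE ?eqxx ?orbT //.
    by move: pv; rewrite vE; lia.
  have /andP [pv2 _] := inside2 _ _ (mem_nth set0 (lt_j : j < size B2)) vj.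
  by rewrite (_ : v = w) ?eqxx ?orbT //; apply: (pos_inj pP); lia.
have B1_pos : 0 < size B1 by lia.
rewrite nth_rev ?prednK ?subnn ?ltn_pred //.
by case/orP: v_r0w => /eqP ->; rewrite !inE !eqxx ?orbT.
Qed.

Section NoInnerTriangle.
Hypothesis no_inner : forall a w b, ~ inner_triangle a w b.

Lemma apex_next a w b : P a < P w < P b -> e a w -> e w b -> e a b ->
  (0 < P a) || (P b < n.-1) -> P w = (P a).+1 \/ (P w).+1 = P b.
Proof.
move=> rng eaw ewb eab outer.
case: (eqVneq (P w) (P a).+1) => [|ha]; first by left.
case: (eqVneq (P w).+1 (P b)) => [|hb]; first by right.
by case: (no_inner (a:=a) (w:=w) (b:=b)); split=> //; lia.
Qed.

Lemma fan_cut a b : P a < P b -> e a b -> (0 < P a) || (P b < n.-1) ->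
  exists2 m, P a <= m < P b & forall x y, e x y -> P a <= P x -> P x < P y -> P y <= P b ->
    (P x <= m < P y) || (P y == (P x).+1).
Proof.
move=> ab; move eq_d: (P b - P a) => d.
elim: d a b ab eq_d => [|d IH] a b ab d_ab eab outer; first lia.
have lt_b := ltn_ord (p b).
case: (ltnP (P a).+1 (P b)) => gap; last by exists (P a) => [|x y _ hx xy hy]; lia.
have [w [rng eaw ewb]] := ear_inside pP eab gap.
case: (apex_next rng eaw ewb eab outer) => hw.
- have [m hm cut] := IH w b (ltac:(lia)) (ltac:(lia)) ewb (ltac:(lia)).
  exists m => [|x y exy hx xy hy]; first lia.
  case: (fan_edges_left ewb hw (ltac:(lia)) exy hx xy hy) => [hwx | [-> [-> | ->]]].
  + by apply: cut; lia.
  + by rewrite hw eqxx orbT.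
  + lia.
- have [m hm cut] := IH a w (ltac:(lia)) (ltac:(lia)) eaw (ltac:(lia)).
  exists m => [|x y exy hx xy hy]; first lia.
  case: (fan_edges_right eaw hw (ltac:(lia)) exy hx xy hy) => [hyw | [-> [-> | ->]]].
  + by apply: cut; lia.
  + by rewrite -hw eqxx orbT.
  + lia.
Qed.

Lemma fan_decomposition a b : P a < P b -> e a b -> (0 < P a) || (P b < n.-1) ->
  exists B, region_decomposition a b B.
Proof.
move=> ab; move eq_d: (P b - P a) => d.
elim: d a b ab eq_d => [|d IH] a b ab d_ab eab outer; first lia.
have lt_b := ltn_ord (p b).
case: (ltnP (P a).+1 (P b)) => gap; last first.
  exists [:: [set a; b]]; split.
  - by move=> v [|i] [|j] [|k] //=; lia.
  - by move=> c; rewrite inE => /eqP ->; rewrite cards2; case: (_ != _).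
  - by rewrite /= !inE !eqxx orbT.
  - by move=> c x; rewrite inE => /eqP -> /set2P [] ->; lia.
  - move=> x y _ hx xy hy; exists [set a; b]; rewrite ?mem_head //.
    by rewrite (_ : x = a) 1?(_ : y = b) ?inE ?eqxx ?orbT //; apply: (pos_inj pP); lia.
have [w [rng eaw ewb]] := ear_inside pP eab gap.
case: (apex_next rng eaw ewb eab outer) => hw.
- have [B dec] := IH w b (ltac:(lia)) (ltac:(lia)) ewb (ltac:(lia)).
  exists ([set a; w; b] :: B); apply: region_decomposition_cons dec _ _ _ _ _ _ _ _;
    rewrite ?inE ?eqxx ?orbT //; try lia.
  move=> x y exy hx xy hy.
  case: (fan_edges_left ewb hw (ltac:(lia)) exy hx xy hy) => [hwx | [-> [-> | ->]]].
  + by left; lia.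
  + by right; rewrite !inE !eqxx !orbT.
  + by right; rewrite !inE !eqxx !orbT.
- have [B dec] := IH a w (ltac:(lia)) (ltac:(lia)) eaw (ltac:(lia)).
  exists ([set b; a; w] :: B); apply: region_decomposition_cons dec _ _ _ _ _ _ _ _;
    rewrite ?inE ?eqxx ?orbT //; try lia.
  move=> x y exy hx xy hy.
  case: (fan_edges_right eaw hw (ltac:(lia)) exy hx xy hy) => [hyw | [-> [-> | ->]]].
  + by left; lia.
  + by right; rewrite !inE !eqxx !orbT.
  + by right; rewrite !inE !eqxx !orbT.
Qed.

Lemma no_inner_triangle_width2 : pathwidth_le e 2.
Proof.
have [r0 [w [r1 [h0 h1 hw e0w ew1]]]] := outer_apex.
have lt_r1 := ltn_ord (p r1).
have [B1 dec1] : exists B, region_decomposition r0 w B.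
  by apply: fan_decomposition; rewrite ?h0; lia.
have [B2 dec2] : exists B, region_decomposition w r1 B.
  by apply: fan_decomposition; rewrite ?h1; lia.
have join := region_decompositions_join h0 h1 hw dec1 dec2.
case: dec1 dec2 => [_ width1 _ _ cover1] [_ width2 _ _ cover2].
set B := rev B1 ++ _ :: B2 in join *.
have cover_lt x y : e x y -> P x < P y -> exists2 c, c \in B & (x \in c) && (y \in c).
  move=> exy xy; case/or3P: (apex_edges h0 h1 hw e0w ew1 exy xy) => h.
  - have [c cB xyc] := cover1 x y exy (ltac:(lia)) xy h.
    by exists c; rewrite // mem_cat mem_rev cB.
  - have [c cB xyc] := cover2 x y exy h xy (ltac:(have := ltn_ord (p y); lia)).
    by exists c; rewrite // mem_cat inE cB !orbT.
  - exists [set r0; w; r1]; first by rewrite mem_cat inE eqxx orbT.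
    by rewrite (_ : x = r0) 1?(_ : y = r1) ?inE ?eqxx ?orbT //; apply: (pos_inj pP); lia.
exists B; split; [split=> // x y exy | ].
  case: (ltngtP (P x) (P y)) => xy; first exact: cover_lt.
    by have [c cB] := cover_lt y x (ltac:(by rewrite e_sym)) xy; rewrite andbC; exists c.
  by move: exy; rewrite (pos_inj pP xy) e_irr.
move=> c; rewrite mem_cat mem_rev inE => /or3P [/width1 | /eqP -> | /width2] //.
exact: cards3_le.
Qed.

Lemma no_inner_triangle_partition : exists Vu Vv : {set T},
  [/\ [disjoint Vu & Vv], Vu :|: Vv = [set: T], induced_path e Vu & induced_path e Vv].
Proof.
have [r0 [w [r1 [h0 h1 hw e0w ew1]]]] := outer_apex.
have [m1 hm1 cut1] : exists2 m, P r0 <= m < P w & forall x y, e x y -> P r0 <= P x ->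
    P x < P y -> P y <= P w -> (P x <= m < P y) || (P y == (P x).+1).
  by apply: fan_cut; rewrite ?h0; lia.
have [m2 hm2 cut2] : exists2 m, P w <= m < P r1 & forall x y, e x y -> P w <= P x ->
    P x < P y -> P y <= P r1 -> (P x <= m < P y) || (P y == (P x).+1).
  by apply: fan_cut; rewrite ?h1; lia.
have m12 : m1 < m2 < n by lia.
have chord_lt x y : e x y -> P x < P y -> ~~ cyclic_adj n (P x) (P y) ->
    (x \in arc m1.+1 (m2 - m1)) != (y \in arc m1.+1 (m2 - m1)).
  move=> exy xy nadj.
  have nsucc : P y != (P x).+1 by apply: contraNneq nadj => ->; rewrite /cyclic_adj eqxx.
  have nouter : ~~ ((P x == 0) && (P y == n.-1)).
    by apply: contra nadj => /andP [/eqP -> /eqP ->]; rewrite /cyclic_adj !eqxx !orbT.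
  have lt_y := ltn_ord (p y).
  rewrite !mem_arc_interval //; case/or3P: (apex_edges h0 h1 hw e0w ew1 exy xy) => h.
  - by have := cut1 x y exy (ltac:(lia)) xy h; lia.
  - by have := cut2 x y exy h xy (ltac:(lia)); lia.
  - by move: nouter; rewrite h.
have chord x y : e x y -> ~~ cyclic_adj n (P x) (P y) ->
    (x \in arc m1.+1 (m2 - m1)) != (y \in arc m1.+1 (m2 - m1)).
  move=> exy nadj; case: (ltngtP (P x) (P y)) => xy; first exact: chord_lt.
    by rewrite eq_sym; apply: chord_lt; rewrite // 1?e_sym // cyclic_adjC.
  by move: exy; rewrite (pos_inj pP xy) e_irr.
have lt_s : m1.+1 < n by lia.
have len_bds : 0 < m2 - m1 < n by lia.
have [pathU pathV] := arc_split_induced_paths lt_s len_bds chord.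
exists (arc m1.+1 (m2 - m1)), (~: arc m1.+1 (m2 - m1)); split=> //.
  by rewrite disjoints_subset setCK.
by rewrite setUCr.
Qed.

End NoInnerTriangle.

End Triangles.

End OuterplanarTriangulation.

Theorem propositionp (n : nat) (T : finType) (e : rel T)
  (e_sym : symmetric e) (e_irr : irreflexive e) (hn : #|T| = n) (hn3 : 3 <= n) :
  (outerplanar_triangulation e /\ pathwidth_le e 2) <-> PW2 n e.
Proof.
have n_gt2 : 2 < #|T| by rewrite hn.
split=> [[[p pP] width] | [_ [[p pP] [Vu [Vv [dUV UV pathU pathV]]]]]].
- split=> //; split; first by exists p.
  apply: (no_inner_triangle_partition e_sym e_irr n_gt2 pP) => a w b.
  exact: (width2_no_inner_triangle e_sym n_gt2 pP width).
- split; first by exists p.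
  apply: (no_inner_triangle_width2 e_sym e_irr n_gt2 pP) => a w b.
  exact: (path_partition_no_inner_triangle e_sym n_gt2 pP dUV UV pathU pathV).
Qed.
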